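(* Let $m\ge 1$, $n\ge 1$ be integers, let $K\in\{\mathbb{R},\mathbb{C}\}$, and let $\mathcal{Z}$ be either $\mathbb{Z}^m$ or $\{t\in\mathbb{Z}^m \mid t\ge t_1\}$ for some $t_1\in\mathbb{Z}^m$. Let $A_\alpha\colon\mathcal{Z}\to\mathcal{M}_n(K)$, $\alpha\in\{1,\dots,m\}$, be matrix functions satisfying the compatibility relations $$A_\alpha(t+1_\beta)A_\beta(t)=A_\beta(t+1_\alpha)A_\alpha(t),\quad \forall t\in\mathcal{Z},\ \forall \alpha,\beta\in\{1,\dots,m\}.$$ Let $T=(T_1,\dots,T_m)\in\mathbb{N}^m$, $T\neq 0$, and suppose that $A_\alpha(t+T_\beta\cdot 1_\beta)=A_\alpha(t)$ for all $\alpha,\beta\in\{1,\dots,m\}$ and all $t\in\mathcal{Z}$. Then: (a) $C_{\alpha,k}(t+T_\beta\cdot 1_\beta)=C_{\alpha,k}(t)$ for all $\alpha,\beta\in\{1,\dots,m\}$, all $k\in\mathbb{N}$ and all $t\in\mathcal{Z}$; (b) $C_{\alpha,T_\alpha}(t)\,C_{\beta,T_\beta}(t)=C_{\beta,T_\beta}(t)\,C_{\alpha,T_\alpha}(t)$ for all $\alpha,\beta\in\{1,\dots,m\}$ and all $t\in\mathcal{Z}$; (c) $\chi(t+T_\alpha\cdot 1_\alpha,s)=\chi(t,s)\,C_{\alpha,T_\alpha}(s)$ for all $\alpha\in\{1,\dots,m\}$ and all $t,s\in\mathcal{Z}$ with $t\ge s$.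
   Context: $\mathbb{N}=\{0,1,2,\dots\}$. For $\alpha\in\{1,\dots,m\}$, $1_\alpha\in\mathbb{Z}^m$ is the vector with $1$ in position $\alpha$ and $0$ elsewhere. On $\mathbb{Z}^m$, $s\le t$ means $s^\alpha\le t^\alpha$ for all $\alpha$. For $\alpha\in\{1,\dots,m\}$, $k\in\mathbb{N}$, $t\in\mathcal{Z}$, define $C_{\alpha,0}(t)=I_n$ and, for $k\ge1$, $C_{\alpha,k}(t)=\prod_{j=1}^{k}A_\alpha(t+(k-j)\cdot 1_\alpha)=A_\alpha(t+(k-1)1_\alpha)\cdots A_\alpha(t+1_\alpha)A_\alpha(t)$. Under the compatibility relations, for each $s\in\mathcal{Z}$ there is a unique function $\chi(\cdot,s)\colon\{t\in\mathcal{Z}\mid t\ge s\}\to\mathcal{M}_n(K)$ with $\chi(s,s)=I_n$ and $\chi(t+1_\alpha,s)=A_\alpha(t)\chi(t,s)$ for all $t\ge s$ and all $\alpha$; $\chi$ is called the transition (fundamental) matrix. *)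

From HB Require Import structures.
From mathcomp Require Import all_boot all_order all_algebra.
From mathcomp Require Import reals.
From mathcomp Require Import complex.
Set Implicit Arguments. Unset Strict Implicit. Unset Printing Implicit Defensive.
Import Order.TTheory GRing.Theory Num.Theory.
Local Open Scope ring_scope.

Definition shift (m : nat) (t : 'I_m -> int) (a : 'I_m) (k : nat) : 'I_m -> int :=
  fun i => t i + (if i == a then k%:Z else 0).

Definition zle (m : nat) (s t : 'I_m -> int) : Prop := forall i, s i <= t i.

(* The domain calZ: None means Z^m, Some t1 means {t | t >= t1}. *)
Definition inDom (m : nat) (dom : option ('I_m -> int)) (t : 'I_m -> int) : Prop :=
  match dom with None => True | Some t1 => zle t1 t end.

(* C_{a,k}(t) = A_a(t+(k-1)1_a) ... A_a(t+1_a) A_a(t), C_{a,0}(t) = I_n *)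
Fixpoint Cmat (K : comNzRingType) (m n : nat) (A : 'I_m -> ('I_m -> int) -> 'M[K]_n)
  (a : 'I_m) (k : nat) (t : 'I_m -> int) : 'M[K]_n :=
  match k with
  | 0 => 1%:M
  | k'.+1 => A a (shift t a k') *m Cmat A a k' t
  end.

(* The full statement of Proposition 2.7 for a given scalar ring K. The
   transition matrix chi is quantified as any function satisfying its
   (uniquely) characterizing properties. *)
Definition prop2p7_stmt (K : comNzRingType) : Prop :=
  forall (m n : nat) (dom : option ('I_m -> int))
    (A : 'I_m -> ('I_m -> int) -> 'M[K]_n)
    (T : 'I_m -> nat)
    (chi : ('I_m -> int) -> ('I_m -> int) -> 'M[K]_n),
  (0 < m)%N -> (0 < n)%N ->
  (forall t, inDom dom t -> forall a b : 'I_m,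
      A a (shift t b 1) *m A b t = A b (shift t a 1) *m A a t) ->
  (exists i, T i != 0%N) ->
  (forall a b : 'I_m, forall t, inDom dom t -> A a (shift t b (T b)) = A a t) ->
  (forall s, inDom dom s -> chi s s = 1%:M) ->
  (forall s t, inDom dom s -> inDom dom t -> zle s t ->
      forall a : 'I_m, chi (shift t a 1) s = A a t *m chi t s) ->
  (forall (a b : 'I_m) (k : nat) t, inDom dom t ->
      Cmat A a k (shift t b (T b)) = Cmat A a k t)
  /\ (forall (a b : 'I_m) t, inDom dom t ->
      Cmat A a (T a) t *m Cmat A b (T b) t = Cmat A b (T b) t *m Cmat A a (T a) t)
  /\ (forall (a : 'I_m) s t, inDom dom s -> inDom dom t -> zle s t ->
      chi (shift t a (T a)) s = chi t s *m Cmat A a (T a) s).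

From HB Require Import structures.
From mathcomp Require Import all_boot all_order all_algebra.
From mathcomp Require Import reals.
From mathcomp Require Import complex.
From mathcomp Require Import zify.
From Stdlib Require Import FunctionalExtensionality.
Set Implicit Arguments. Unset Strict Implicit. Unset Printing Implicit Defensive.
Import Order.TTheory GRing.Theory Num.Theory.
Local Open Scope ring_scope.

(* Compatibility says that one unit step in direction a followed by one in
   direction b gives the same product as the steps in the other order; tiling
   a k-by-l rectangle of such unit squares gives C_{a,k} C_{b,l} = C_{b,l} C_{a,k}
   up to the base points, and periodicity makes the base points irrelevant.
   For (c), chi(t + T_a 1_a, s) = C_{a,T_a}(t) chi(t, s), and
   C_{a,T_a}(t) chi(t, s) = chi(t, s) C_{a,T_a}(s) follows by induction along
   unit steps from s to t, each step being one commuting square. *)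

Lemma shiftC m (t : 'I_m -> int) a b x y :
  shift (shift t a x) b y = shift (shift t b y) a x.
Proof. by apply: functional_extensionality => i; rewrite /shift addrAC. Qed.

Lemma shiftD m (t : 'I_m -> int) a x y :
  shift (shift t a x) a y = shift t a (x + y).
Proof.
apply: functional_extensionality => i; rewrite /shift.
by case: (i == a); rewrite ?addr0 // -addrA -PoszD.
Qed.

Lemma shift0 m (t : 'I_m -> int) a : shift t a 0 = t.
Proof. by apply: functional_extensionality => i; rewrite /shift; case: (i == a); rewrite addr0. Qed.

Lemma zle_shift m (t : 'I_m -> int) a k : zle t (shift t a k).
Proof. by move=> i; rewrite /shift; case: (i == a); rewrite ?addr0 //; lia. Qed.

Lemma zle_trans m (r s t : 'I_m -> int) : zle r s -> zle s t -> zle r t.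
Proof. by move=> hrs hst i; apply: le_trans (hrs i) (hst i). Qed.

Lemma inDom_le m dom (s t : 'I_m -> int) : inDom dom s -> zle s t -> inDom dom t.
Proof. by case: dom => //= t1; apply: zle_trans. Qed.

Lemma inDom_shift m dom (t : 'I_m -> int) a k : inDom dom t -> inDom dom (shift t a k).
Proof. by move=> ht; apply: inDom_le ht (zle_shift _ _ _). Qed.

Definition zdist m (s t : 'I_m -> int) : nat := (\sum_(i < m) absz (t i - s i))%N.

Lemma zle_eq_or_shift1 m (s t : 'I_m -> int) : zle s t ->
  t = s \/ exists b t', [/\ zle s t', t = shift t' b 1 & zdist s t = (zdist s t').+1].
Proof.
move=> hst; case: (boolP [exists i, s i < t i]) => [/existsP [b hb] | /existsPn hn].
  right; exists b, (fun j => if j == b then t j - 1 else t j); split.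
  - by move=> j; case: ifP => [/eqP -> | _]; [move: hb; lia | exact: hst].
  - apply: functional_extensionality => j; rewrite /shift.
    by case: (j == b); rewrite ?addr0 ?subrK.
  - rewrite /zdist (bigD1 b) //= [in RHS](bigD1 b) //= eqxx.
    rewrite [in RHS](eq_bigr (fun j => absz (t j - s j))); last by move=> j /negbTE ->.
    by move: hb; lia.
left; apply: functional_extensionality => j.
by apply/eqP; rewrite eq_le (hst j) andbT leNgt hn.
Qed.

Lemma zle_ind m (s : 'I_m -> int) (P : ('I_m -> int) -> Prop) :
  P s -> (forall t b, zle s t -> P t -> P (shift t b 1)) ->
  forall t, zle s t -> P t.
Proof.
move=> Ps PS t; move: {2}(zdist s t) (leqnn (zdist s t)) => N.
elim: N t => [|N IH] t hN hst;
  case: (zle_eq_or_shift1 hst) => [-> // | [b [t' [hst' ht hd]]]].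
  by rewrite hd in hN.
by rewrite ht; apply: PS => //; apply: (IH t' _ hst'); rewrite -ltnS -hd.
Qed.

Section TransitionMatrices.

Variables (K : comNzRingType) (m n : nat) (dom : option ('I_m -> int)).
Variable A : 'I_m -> ('I_m -> int) -> 'M[K]_n.

Lemma Cmat_periodic a b p :
  (forall t, inDom dom t -> A a (shift t b p) = A a t) ->
  forall k t, inDom dom t -> Cmat A a k (shift t b p) = Cmat A a k t.
Proof.
move=> periodicA; elim=> [|k IH] t ht //=.
by rewrite IH // shiftC periodicA //; apply: inDom_shift.
Qed.

Hypothesis compatA : forall t, inDom dom t -> forall a b : 'I_m,
  A a (shift t b 1) *m A b t = A b (shift t a 1) *m A a t.

Lemma Cmat_A_comm a b k t : inDom dom t ->
  Cmat A a k (shift t b 1) *m A b t = A b (shift t a k) *m Cmat A a k t.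
Proof.
elim: k t => [|k IH] t ht /=; first by rewrite mul1mx mulmx1 shift0.
rewrite -mulmxA IH // mulmxA (shiftC t b a 1 k) compatA; last exact: inDom_shift.
by rewrite shiftD addn1 mulmxA.
Qed.

Lemma Cmat_comm a b k l t : inDom dom t ->
  Cmat A a k (shift t b l) *m Cmat A b l t = Cmat A b l (shift t a k) *m Cmat A a k t.
Proof.
elim: l t => [|l IH] t ht /=; first by rewrite mul1mx mulmx1 shift0.
rewrite -addn1 -shiftD mulmxA Cmat_A_comm; last exact: inDom_shift.
by rewrite -mulmxA IH // !mulmxA (shiftC t b a l k).
Qed.

Variable chi : ('I_m -> int) -> ('I_m -> int) -> 'M[K]_n.
Hypothesis chi_refl : forall s, inDom dom s -> chi s s = 1%:M.
Hypothesis chi_step : forall s t, inDom dom s -> inDom dom t -> zle s t ->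
  forall a : 'I_m, chi (shift t a 1) s = A a t *m chi t s.

Lemma chi_shift s t a k : inDom dom s -> zle s t ->
  chi (shift t a k) s = Cmat A a k t *m chi t s.
Proof.
move=> hs; elim: k t => [|k IH] t hst /=; first by rewrite shift0 mul1mx.
have ht : inDom dom (shift t a k) by apply: inDom_shift (inDom_le hs hst).
rewrite -addn1 -shiftD chi_step //; last exact: zle_trans hst (zle_shift _ _ _).
by rewrite IH // mulmxA.
Qed.

Lemma Cmat_chi_comm a k s t :
  (forall b u, inDom dom u -> A b (shift u a k) = A b u) ->
  inDom dom s -> zle s t -> Cmat A a k t *m chi t s = chi t s *m Cmat A a k s.
Proof.
move=> periodicA hs; move: t; apply: zle_ind => [|u b hsu IH].
  by rewrite chi_refl // mul1mx mulmx1.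
have hu : inDom dom u by apply: inDom_le hs hsu.
by rewrite chi_step // mulmxA Cmat_A_comm // periodicA // -!mulmxA IH.
Qed.

End TransitionMatrices.

Lemma prop2p7_stmtP (K : comNzRingType) : prop2p7_stmt K.
Proof.
move=> m n dom A T chi _ _ compatA _ periodicA chi_refl chi_step.
have Cmat_periodicT a b k t : inDom dom t ->
    Cmat A a k (shift t b (T b)) = Cmat A a k t.
  by apply: Cmat_periodic => u; apply: periodicA.
split; [exact: Cmat_periodicT | split].
  move=> a b t ht; have := Cmat_comm compatA a b (T a) (T b) ht.
  by rewrite !Cmat_periodicT.
move=> a s t hs _ hst; rewrite (chi_shift chi_step a (T a) hs hst).
exact: (Cmat_chi_comm compatA chi_refl chi_step (periodicA^~ a) hs hst).
Qed.

Theorem proposition2p7 (R : realType) :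
  prop2p7_stmt R /\ prop2p7_stmt (complex R).
Proof. by split; apply: prop2p7_stmtP. Qed.
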